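(* Let $A_1,A_2\in\mathbb{R}^{2\times2}$ be Hurwitz matrices. If $\det([A_1,A_2])\ge0$, where $[A_1,A_2]=A_1A_2-A_2A_1$, then the switched system $\dot x=u(t)A_1x+(1-u(t))A_2x$, $u:[0,\infty)\to\{0,1\}$ measurable, admits a common quadratic Lyapunov function, i.e. there is a symmetric positive definite $P$ such that $A_1^TP+PA_1$ and $A_2^TP+PA_2$ are both negative definite.
   Context: A real $2\times2$ matrix is Hurwitz if all its eigenvalues have negative real part. *)

(* real 2x2 matrices over an arbitrary real closed field R
   (the statement over the reals is the case R = reals; it is first-order,
   so stating it for every rcfType is a faithful generalization). *)
From HB Require Import structures.
From mathcomp Require Import all_boot all_order all_algebra.
Set Implicit Arguments. Unset Strict Implicit. Unset Printing Implicit Defensive.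
Import Order.TTheory GRing.Theory Num.Theory.
Local Open Scope ring_scope.

(* a + i b (a, b real) is a complex eigenvalue of the real matrix A:
   there is a nonzero complex vector v = x + i y with A v = (a + i b) v,
   written out in real and imaginary parts:
     A x = a x - b y,   A y = b x + a y,   (x, y) <> (0, 0). *)
Definition complex_eigenvalue (R : rcfType) (n : nat) (A : 'M[R]_n) (a b : R) : Prop :=
  exists x y : 'cV[R]_n,
    [/\ (x != 0) || (y != 0),
        A *m x = a *: x - b *: y &
        A *m y = b *: x + a *: y].

Definition hurwitz (R : rcfType) (n : nat) (A : 'M[R]_n) : Prop :=
  forall a b : R, complex_eigenvalue A a b -> a < 0.

Definition quad_form (R : rcfType) (n : nat) (M : 'M[R]_n) (x : 'cV[R]_n) : R :=
  (x^T *m M *m x) 0 0.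

Definition pos_def (R : rcfType) (n : nat) (P : 'M[R]_n) : Prop :=
  P^T = P /\ forall x : 'cV[R]_n, x != 0 -> 0 < quad_form P x.

Definition neg_def (R : rcfType) (n : nat) (M : 'M[R]_n) : Prop :=
  M^T = M /\ forall x : 'cV[R]_n, x != 0 -> quad_form M x < 0.

Definition commutator (R : rcfType) (n : nat) (A B : 'M[R]_n) : 'M[R]_n :=
  A *m B - B *m A.

From HB Require Import structures.
From mathcomp Require Import all_boot all_order all_algebra.
From mathcomp Require Import ring lra.
Set Implicit Arguments.
Unset Strict Implicit.
Unset Printing Implicit Defensive.
Import Order.TTheory GRing.Theory Num.Theory.
Local Open Scope ring_scope.

(* A 2x2 Hurwitz matrix has tr A < 0 < det A.  We look for P = sym2 a b c =
   [[a, b], [b, c]]; then M = A^T P + P A satisfies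
   det M = 4 det A det P - cross(A, P)^2 and tr (adj P M) = 2 det P tr A, so
   for P > 0 and tr A < 0 the inequality det M > 0 alone forces M < 0.  It
   thus suffices to find (a, b, c) with ac - b^2 > 0 and det (A_i^T P + P A_i)
   > 0 for i = 1, 2 (and to replace P by - P if a < 0).  The commutator is
   K = [[k0, k1], [k2, - k0]] with det K = - k0^2 - k1 k2 >= 0.  If k1 <> k2
   an explicit P built from K works; if k1 = k2 then K = 0, and commuting
   matrices are handled according to the eigenvalues of A1 and A2 (non-real,
   distinct real, double). *)

Section TwoByTwo.
Variable R : rcfType.
Implicit Types (A M P : 'M[R]_2) (a b c : R).

Lemma ord2P (i : 'I_2) : i = 0 \/ i = 1.
Proof. by case: i => [[|[|i]] Hi]; [left; apply: val_inj | right; apply: val_inj |]. Qed.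

Lemma lift_ord0 : lift ord0 ord0 = 1 :> 'I_2.
Proof. exact: val_inj. Qed.

Lemma mulmx2 m n (A : 'M[R]_(m, 2)) (B : 'M[R]_(2, n)) i j :
  (A *m B) i j = A i 0 * B 0 j + A i 1 * B 1 j.
Proof. by rewrite !mxE !big_ord_recl big_ord0 addr0 lift_ord0. Qed.

Lemma det2 M : \det M = M 0 0 * M 1 1 - M 0 1 * M 1 0.
Proof.
rewrite (expand_det_row _ 0) !big_ord_recl big_ord0 addr0 /cofactor !det_mx11 !mxE /=.
have -> : lift 0 0 = 1 :> 'I_2 by apply: val_inj.
have -> : lift 1 0 = 0 :> 'I_2 by apply: val_inj.
by rewrite expr0 expr1 !mul1r mulN1r mulrN.
Qed.

Lemma tr2 M : \tr M = M 0 0 + M 1 1.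
Proof. by rewrite /mxtrace !big_ord_recl big_ord0 addr0 lift_ord0. Qed.

Definition col2 (x0 x1 : R) : 'cV[R]_2 := \col_(i < 2) [:: x0; x1]`_i.

Lemma col2_eq (x y : 'cV[R]_2) : x 0 0 = y 0 0 -> x 1 0 = y 1 0 -> x = y.
Proof. by move=> e0 e1; apply/matrixP => i j; rewrite (ord1 j); case: (ord2P i) => ->. Qed.

Lemma quad_form2 M (x : 'cV[R]_2) : quad_form M x =
  x 0 0 * (M 0 0 * x 0 0 + M 0 1 * x 1 0) + x 1 0 * (M 1 0 * x 0 0 + M 1 1 * x 1 0).
Proof. by rewrite /quad_form !mulmx2 !mxE; ring. Qed.

(* Sylvester's criterion in dimension 2: a symmetric M with M00 > 0 and
   det M > 0 is positive definite, by completing the square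
   M00 * x^T M x = (M00 x0 + M01 x1)^2 + det M * x1^2. *)
Lemma pos_def2 M : M^T = M -> 0 < M 0 0 -> 0 < \det M -> pos_def M.
Proof.
move=> symM pos0 posD; split=> // x x_neq0.
have M10 : M 1 0 = M 0 1 by rewrite -[in LHS]symM mxE.
have square : M 0 0 * quad_form M x =
    (M 0 0 * x 0 0 + M 0 1 * x 1 0) ^+ 2 + \det M * x 1 0 ^+ 2.
  by rewrite quad_form2 det2 M10; ring.
rewrite -(pmulr_rgt0 _ pos0) square.
have [x1_0 | x1_neq0] := eqVneq (x 1 0) 0; last first.
  by rewrite ltr_wpDl ?sqr_ge0 // mulr_gt0 // exprn_even_gt0.
have x0_neq0 : x 0 0 != 0.
  by apply: contraNneq x_neq0 => x0_0; apply/eqP/col2_eq; rewrite mxE.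
by rewrite x1_0 mulr0 addr0 expr0n mulr0 addr0 exprn_even_gt0 // mulf_neq0 // lt0r_neq0.
Qed.

Lemma neg_def2 M : M^T = M -> M 0 0 < 0 -> 0 < \det M -> neg_def M.
Proof.
move=> symM neg0 posD.
have [_ posN] : pos_def (- M).
  apply: pos_def2; first by rewrite linearN /= symM.
    by rewrite mxE oppr_gt0.
  by rewrite det2 !mxE mulrNN mulrNN -det2.
split=> // x /posN; rewrite /quad_form mulmxN mulNmx mxE.
by rewrite oppr_gt0.
Qed.

(* A real root of the characteristic polynomial is an eigenvalue: l%:M - A
   is singular, and a kernel vector of its transpose is an eigenvector. *)
Lemma real_eigenvalue2 A l :
  l ^+ 2 - \tr A * l + \det A = 0 -> complex_eigenvalue A l 0.
Proof.
move=> char_l.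
have /det0P [v v_neq0 v_ker] : \det (l%:M - A)^T == 0.
  rewrite det_tr det2 !mxE /= -char_l tr2 det2; apply/eqP; ring.
exists v^T, 0; split.
- by rewrite trmx_eq0 v_neq0.
- move/(congr1 trmx): v_ker; rewrite trmx_mul trmxK trmx0 mulmxBl mul_scalar_mx.
  by move/eqP; rewrite subr_eq0 scale0r subr0 => /eqP.
- by rewrite mulmx0 scale0r scaler0 addr0.
Qed.

(* A pair of non-real roots a +- i b: the eigenvector is x + i y with
   x = (b, 0) and y = (a - A00, - A10). *)
Lemma complex_eigenvalue2 A a b :
  \tr A = 2 * a -> b ^+ 2 = \det A - a ^+ 2 -> b != 0 -> complex_eigenvalue A a b.
Proof.
rewrite tr2 det2 => trA b2 b_neq0.
exists (col2 b 0), (col2 (a - A 0 0) (- A 1 0)); split.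
- apply/orP; left; apply/eqP => /(congr1 (fun x : 'cV[R]_2 => x 0 0)).
  by rewrite !mxE /=; apply/eqP.
- by apply: col2_eq; rewrite !mulmx2 !mxE /=; ring.
- apply: col2_eq; rewrite !mulmx2 !mxE /=; apply/eqP; rewrite -subr_eq0; apply/eqP.
  + transitivity ((A 0 0 * A 1 1 - A 0 1 * A 1 0 - a ^+ 2 - b ^+ 2)
                  + A 0 0 * (2 * a - (A 0 0 + A 1 1))); first ring.
    by rewrite b2 trA !subrr mulr0 addr0.
  + transitivity (A 1 0 * (2 * a - (A 0 0 + A 1 1))); first ring.
    by rewrite trA subrr mulr0.
Qed.

(* A 2x2 Hurwitz matrix has negative trace and positive determinant:
   with real roots l1, l2 < 0, tr A = l1 + l2 and det A = l1 l2; with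
   non-real roots, det A > (tr A)^2 / 4 and tr A / 2 is their real part. *)
Lemma hurwitz2 A : hurwitz A -> \tr A < 0 /\ 0 < \det A.
Proof.
move=> hurA; set T := \tr A; set D := \det A.
have [disc_ge0 | disc_lt0] := leP 0 (T ^+ 2 - 4 * D).
- set d := Num.sqrt (T ^+ 2 - 4 * D).
  have d2 : d ^+ 2 = T ^+ 2 - 4 * D by rewrite sqr_sqrtr.
  have root_neg e : e ^+ 2 = T ^+ 2 - 4 * D -> (T + e) / 2 < 0.
    move=> e2; apply: (hurA _ 0); apply: real_eigenvalue2; rewrite -/T -/D.
    transitivity ((e ^+ 2 - (T ^+ 2 - 4 * D)) / 4); first by field.
    by rewrite e2 subrr mul0r.
  have l1_neg := root_neg d d2.
  have l2_neg := root_neg (- d) (etrans (sqrrN d) d2).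
  have -> : T = (T + d) / 2 + (T + - d) / 2 by field.
  have -> : D = (T + d) / 2 * ((T + - d) / 2).
    transitivity ((T ^+ 2 - d ^+ 2) / 4); first by rewrite d2; field.
    by field.
  by split; [lra | nra].
- have D_pos : 0 < D by have := sqr_ge0 T; lra.
  set d := Num.sqrt (4 * D - T ^+ 2).
  have d2 : d ^+ 2 = 4 * D - T ^+ 2 by rewrite sqr_sqrtr //; lra.
  have d_neq0 : d != 0 by rewrite gt_eqF // sqrtr_gt0; lra.
  suff : T / 2 < 0 by split => //; lra.
  apply: (hurA _ (d / 2)); apply: complex_eigenvalue2.
  + by rewrite /T; field.
  + by rewrite expr_div_n d2 -/D; field.
  + by rewrite mulf_neq0 // invr_eq0 pnatr_eq0.
Qed.

Definition sym2 a b c : 'M[R]_2 :=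
  \matrix_(i, j) if (i : nat) == j then (if (i : nat) == 0%N then a else c) else b.

Lemma sym2_sym a b c : (sym2 a b c)^T = sym2 a b c.
Proof. by apply/matrixP => i j; rewrite !mxE eq_sym; case: (ord2P i) => ->; case: (ord2P j) => ->. Qed.

Lemma det_sym2 a b c : \det (sym2 a b c) = a * c - b ^+ 2.
Proof. by rewrite det2 !mxE /=; ring. Qed.

Lemma sym2_pos_def a b c : 0 < a -> 0 < a * c - b ^+ 2 -> pos_def (sym2 a b c).
Proof. by move=> a_pos detP; apply: pos_def2; rewrite ?sym2_sym ?det_sym2 ?mxE. Qed.

Definition lyap A P : 'M[R]_2 := A^T *m P + P *m A.

Lemma lyap_sym A P : P^T = P -> (lyap A P)^T = lyap A P.
Proof. by move=> symP; rewrite /lyap linearD /= !trmx_mul trmxK symP addrC. Qed.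

Lemma lyapE A P i j :
  lyap A P i j = (A 0 i * P 0 j + A 1 i * P 1 j) + (P i 0 * A 0 j + P i 1 * A 1 j).
Proof. by rewrite [LHS]mxE !mulmx2 !mxE. Qed.

(* The off-diagonal entry of the antisymmetric matrix A^T P - P A. *)
Definition cross A a b c : R := b * (A 0 0 - A 1 1) - a * A 0 1 + c * A 1 0.

Lemma det_lyap A a b c :
  \det (lyap A (sym2 a b c)) = 4 * \det A * (a * c - b ^+ 2) - cross A a b c ^+ 2.
Proof. by rewrite /cross !det2 !lyapE !mxE /=; ring. Qed.

(* tr (adj P * M) = 2 det P tr A, written in coordinates. *)
Lemma lyap_pairing A a b c (M := lyap A (sym2 a b c)) :
  c * M 0 0 - 2 * b * M 0 1 + a * M 1 1 = 2 * (a * c - b ^+ 2) * \tr A.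
Proof. by rewrite /M tr2 !lyapE !mxE /=; ring. Qed.

(* The trace pairing of two positive definite 2x2 forms is positive. *)
Lemma pairing_pos a b c m0 m1 m2 :
  0 < a -> 0 < a * c - b ^+ 2 -> 0 < m0 -> 0 < m0 * m2 - m1 ^+ 2 ->
  0 < c * m0 - 2 * b * m1 + a * m2.
Proof.
move=> a_pos detP m0_pos detM.
have sos : a * m0 * (c * m0 - 2 * b * m1 + a * m2) =
    (a * c - b ^+ 2) * m0 ^+ 2 + (b * m0 - a * m1) ^+ 2 + a ^+ 2 * (m0 * m2 - m1 ^+ 2).
  by ring.
rewrite -(pmulr_rgt0 _ (mulr_gt0 a_pos m0_pos)) sos.
have := mulr_gt0 detP (exprn_gt0 2 m0_pos).
have := sqr_ge0 (b * m0 - a * m1); have := mulr_ge0 (sqr_ge0 a) (ltW detM).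
lra.
Qed.

(* If P > 0 and tr A < 0, then det (A^T P + P A) > 0 suffices for
   A^T P + P A < 0: otherwise it would be positive definite and its pairing
   with adj P, equal to 2 det P tr A < 0, would be positive. *)
Lemma lyap_neg_def A a b c :
  \tr A < 0 -> 0 < a -> 0 < a * c - b ^+ 2 -> 0 < \det (lyap A (sym2 a b c)) ->
  neg_def (lyap A (sym2 a b c)).
Proof.
set M := lyap A (sym2 a b c) => trA a_pos detP detM.
have symM : M^T = M by apply/lyap_sym/sym2_sym.
have M10 : M 1 0 = M 0 1 by rewrite -[in LHS]symM mxE.
apply: neg_def2 => //; rewrite ltNge; apply/negP => M00_ge0.
have M00_pos : 0 < M 0 0.
  rewrite lt_def M00_ge0 andbT; apply: contraTneq detM => M00_0.
  by rewrite det2 M00_0 M10 mul0r sub0r oppr_gt0 -leNgt -expr2 sqr_ge0.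
have detM2 : 0 < M 0 0 * M 1 1 - M 0 1 ^+ 2 by rewrite expr2 -{2}M10 -det2.
have := pairing_pos a_pos detP M00_pos detM2.
by rewrite lyap_pairing pmulr_rgt0 ?mulr_gt0 //; lra.
Qed.

Definition lyap_candidate A1 A2 a b c : Prop :=
  [/\ 0 < a * c - b ^+ 2, 0 < \det (lyap A1 (sym2 a b c))
    & 0 < \det (lyap A2 (sym2 a b c))].

Lemma lyap_candidate_sym A1 A2 a b c :
  lyap_candidate A1 A2 a b c -> lyap_candidate A2 A1 a b c.
Proof. by case. Qed.

Lemma lyap_candidate_opp A1 A2 a b c :
  lyap_candidate A1 A2 a b c -> lyap_candidate A1 A2 (- a) (- b) (- c).
Proof.
have cross_opp A : cross A (- a) (- b) (- c) = - cross A a b c by rewrite /cross; ring.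
by rewrite /lyap_candidate !det_lyap !cross_opp !sqrrN mulrNN.
Qed.

(* Since the conditions are invariant under P |-> - P and force a <> 0,
   the candidate can be taken positive definite. *)
Lemma lyap_candidate_pos A1 A2 a b c :
  lyap_candidate A1 A2 a b c -> exists a b c, 0 < a /\ lyap_candidate A1 A2 a b c.
Proof.
move=> cand; have [detP _ _] := cand.
have [a_neg | a_pos | a_0] := ltgtP a 0.
- by exists (- a), (- b), (- c); rewrite oppr_gt0; split=> //; apply: lyap_candidate_opp.
- by exists a, b, c.
- by move: detP; rewrite a_0 mul0r sub0r oppr_gt0 ltNge sqr_ge0.
Qed.

Lemma commutatorE A1 A2 i j : commutator A1 A2 i j =
  (A1 i 0 * A2 0 j + A1 i 1 * A2 1 j) - (A2 i 0 * A1 0 j + A2 i 1 * A1 1 j).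
Proof. by rewrite [LHS]mxE [X in _ + X]mxE !mulmx2. Qed.

Lemma commutator_traceless A1 A2 :
  commutator A1 A2 1 1 = - commutator A1 A2 0 0.
Proof. by rewrite !commutatorE; ring. Qed.

Lemma commutator_swap A1 A2 : commutator A2 A1 = - commutator A1 A2.
Proof. by rewrite /commutator opprB. Qed.

(* A traceless K with K01 = K10 has det K = - K00^2 - K01^2, so
   det K >= 0 forces K = 0. *)
Lemma commutator_zero A1 A2 (K := commutator A1 A2) :
  0 <= \det K -> K 0 1 = K 1 0 -> K = 0.
Proof.
move=> detK K_sym.
have K11 : K 1 1 = - K 0 0 by apply: commutator_traceless.
have sum_sq : K 0 0 ^+ 2 + K 0 1 ^+ 2 = 0.
  have detK_sq : \det K = - (K 0 0 ^+ 2 + K 0 1 ^+ 2) by rewrite det2 K11 -K_sym; ring.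
  by have := sqr_ge0 (K 0 0); have := sqr_ge0 (K 0 1); lra.
move/eqP: sum_sq; rewrite paddr_eq0 ?sqr_ge0 // !sqrf_eq0 => /andP [/eqP K00 /eqP K01].
apply/matrixP => i j; rewrite [RHS]mxE.
by case: (ord2P i) => ->; case: (ord2P j) => ->; rewrite ?K11 -?K_sym ?K00 ?K01 ?oppr0.
Qed.

Lemma generic_bound (D m k s w Q : R) :
  0 < D -> 0 < m -> 0 <= k -> s != 0 -> 0 <= Q -> m * w ^+ 2 <= 4 * D * k ->
  0 < 4 * D * (k ^+ 2 * Q + k * s ^+ 2 * m + s ^+ 2 * m ^+ 2) - (s * m * w) ^+ 2.
Proof.
move=> D_pos m_pos k_ge0 s_neq0 Q_ge0 wk.
have -> : 4 * D * (k ^+ 2 * Q + k * s ^+ 2 * m + s ^+ 2 * m ^+ 2) - (s * m * w) ^+ 2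
    = 4 * D * k ^+ 2 * Q + s ^+ 2 * m * (4 * D * k - m * w ^+ 2) + 4 * D * s ^+ 2 * m ^+ 2.
  by ring.
have s2_pos : 0 < s ^+ 2 by rewrite exprn_even_gt0.
have := mulr_ge0 (mulr_ge0 (ltW D_pos) (sqr_ge0 k)) Q_ge0.
have : 0 <= 4 * D * k - m * w ^+ 2 by rewrite subr_ge0.
move/(mulr_ge0 (ltW (mulr_gt0 s2_pos m_pos))).
have := mulr_gt0 (mulr_gt0 D_pos s2_pos) (exprn_gt0 2 m_pos).
by lra.
Qed.

(* With s = K01 - K10, m = det A1 det A2,
   w_i = (A_i)10 - (A_i)01 and k = w1^2 det A2 + w2^2 det A1, the matrix
   P = [[s m - k K10, k K00], [k K00, k K01 + s m]] has
   det P = k^2 det K + k s^2 m + s^2 m^2 and cross(A_i, P) = s m w_i. *)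
Lemma generic_candidate A1 A2 (K := commutator A1 A2) :
  0 < \det A1 -> 0 < \det A2 -> 0 <= \det K -> K 0 1 != K 1 0 ->
  exists a b c, lyap_candidate A1 A2 a b c.
Proof.
move=> D1_pos D2_pos detK_ge0 K_asym.
pose s := K 0 1 - K 1 0; pose m := \det A1 * \det A2.
pose w1 := A1 1 0 - A1 0 1; pose w2 := A2 1 0 - A2 0 1.
pose k := w1 ^+ 2 * \det A2 + w2 ^+ 2 * \det A1.
have s_neq0 : s != 0 by rewrite subr_eq0.
have s2_pos : 0 < s ^+ 2 by rewrite exprn_even_gt0.
have m_pos : 0 < m by rewrite mulr_gt0.
have k_ge0 : 0 <= k by rewrite addr_ge0 // mulr_ge0 ?sqr_ge0 // ltW.
exists (s * m - k * K 1 0), (k * K 0 0), (k * K 0 1 + s * m).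
have detP : (s * m - k * K 1 0) * (k * K 0 1 + s * m) - (k * K 0 0) ^+ 2
    = k ^+ 2 * \det K + k * s ^+ 2 * m + s ^+ 2 * m ^+ 2.
  by rewrite det2 commutator_traceless /s; ring.
have cross1 : cross A1 (s * m - k * K 1 0) (k * K 0 0) (k * K 0 1 + s * m) = s * m * w1.
  by rewrite /cross /s /m /k /w1 /w2 /K !commutatorE !det2; ring.
have cross2 : cross A2 (s * m - k * K 1 0) (k * K 0 0) (k * K 0 1 + s * m) = s * m * w2.
  by rewrite /cross /s /m /k /w1 /w2 /K !commutatorE !det2; ring.
split; rewrite ?det_lyap ?cross1 ?cross2 detP.
- have := mulr_ge0 (sqr_ge0 k) detK_ge0.
  have := mulr_ge0 (mulr_ge0 k_ge0 (ltW s2_pos)) (ltW m_pos).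
  by have := mulr_gt0 s2_pos (exprn_gt0 2 m_pos); lra.
- apply: generic_bound => //; rewrite -subr_ge0.
  have -> : 4 * \det A1 * k - m * w1 ^+ 2
      = 3 * m * w1 ^+ 2 + 4 * \det A1 ^+ 2 * w2 ^+ 2 by rewrite /k /m; ring.
  have := mulr_ge0 (ltW m_pos) (sqr_ge0 w1).
  by have := mulr_ge0 (sqr_ge0 (\det A1)) (sqr_ge0 w2); lra.
- apply: generic_bound => //; rewrite -subr_ge0.
  have -> : 4 * \det A2 * k - m * w2 ^+ 2
      = 3 * m * w2 ^+ 2 + 4 * \det A2 ^+ 2 * w1 ^+ 2 by rewrite /k /m; ring.
  have := mulr_ge0 (ltW m_pos) (sqr_ge0 w2).
  by have := mulr_ge0 (sqr_ge0 (\det A2)) (sqr_ge0 w1); lra.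
Qed.

Definition disc A : R := \tr A ^+ 2 - 4 * \det A.

(* The P for which A1 is a scaled rotation (A1^T P + P A1 = tr A1 P),
   evaluated on an arbitrary A. *)
Lemma rotation_lyap A1 A
    (P := sym2 (- 2 * A1 1 0) (A1 0 0 - A1 1 1) (2 * A1 0 1)) :
  \det (lyap A P) = \tr A ^+ 2 * (- disc A1) + 4 * \det (commutator A1 A).
Proof. by rewrite det_lyap /cross /disc !tr2 !det2 !commutatorE; ring. Qed.

Lemma complex_commuting_candidate A1 A2 :
  disc A1 < 0 -> \tr A1 < 0 -> \tr A2 < 0 -> commutator A1 A2 = 0 ->
  exists a b c, lyap_candidate A1 A2 a b c.
Proof.
move=> disc_neg tr1_neg tr2_neg comm12.
have comm11 : commutator A1 A1 = 0 by rewrite /commutator subrr.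
exists (- 2 * A1 1 0), (A1 0 0 - A1 1 1), (2 * A1 0 1); split.
- have -> : - 2 * A1 1 0 * (2 * A1 0 1) - (A1 0 0 - A1 1 1) ^+ 2 = - disc A1.
    by rewrite /disc tr2 det2; ring.
  by rewrite oppr_gt0.
- by rewrite rotation_lyap comm11 det0 mulr0 addr0 mulr_gt0 ?exprn_even_gt0 ?oppr_gt0 ?ltr0_neq0.
- by rewrite rotation_lyap comm12 det0 mulr0 addr0 mulr_gt0 ?exprn_even_gt0 ?oppr_gt0 ?ltr0_neq0.
Qed.

(* A P for which P A1 is symmetric (A1 is self-adjoint for P); its cross term
   with any A is a combination of the entries of [A1, A]. *)
Lemma eigenbasis_cross A1 A :
  let N := - disc A1 in let w := A1 1 0 - A1 0 1 in
  let K := commutator A1 A in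
  cross A (N - 2 * A1 1 0 * w) ((A1 0 0 - A1 1 1) * w) (N + 2 * A1 0 1 * w)
    = - 2 * (A1 1 0 + A1 0 1) * K 0 0 + (A1 0 0 - A1 1 1) * (K 0 1 + K 1 0).
Proof. by rewrite /cross /disc tr2 det2 !commutatorE; ring. Qed.

Lemma real_commuting_candidate A1 A2 :
  0 < disc A1 -> 0 < \det A1 -> 0 < \det A2 -> commutator A1 A2 = 0 ->
  exists a b c, lyap_candidate A1 A2 a b c.
Proof.
move=> disc_pos D1_pos D2_pos comm12.
have comm11 : commutator A1 A1 = 0 by rewrite /commutator subrr.
set N := - disc A1; set w := A1 1 0 - A1 0 1.
set a := N - 2 * A1 1 0 * w; set b := (A1 0 0 - A1 1 1) * w; set c := N + 2 * A1 0 1 * w.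
have detP : a * c - b ^+ 2 = N * (N - w ^+ 2) by rewrite /a /b /c /N /w /disc tr2 det2; ring.
have detP_pos : 0 < N * (N - w ^+ 2).
  by rewrite nmulr_rgt0 ?oppr_lt0 //; have := sqr_ge0 w; rewrite /N; lra.
have lyap_pos A : 0 < \det A -> commutator A1 A = 0 -> 0 < \det (lyap A (sym2 a b c)).
  move=> D_pos comm.
  have cross0 : cross A a b c = 0 by rewrite eigenbasis_cross comm !mxE; ring.
  by rewrite det_lyap cross0 detP; have := mulr_gt0 D_pos detP_pos; lra.
by exists a, b, c; split; [rewrite detP | exact: lyap_pos | exact: lyap_pos].
Qed.

Lemma repeated_bound (t u w v m k : R) :
  t != 0 -> u != 0 -> m = t ^+ 2 * u ^+ 2 -> k = t ^+ 2 + u ^+ 2 ->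
  0 < t ^+ 2 * (m ^+ 2 + 2 * m * k * (w ^+ 2 + v ^+ 2)) - (m * w) ^+ 2.
Proof.
move=> t_neq0 u_neq0 m_def k_def.
have t2_pos : 0 < t ^+ 2 by rewrite exprn_even_gt0.
have u2_pos : 0 < u ^+ 2 by rewrite exprn_even_gt0.
have m_pos : 0 < m by rewrite m_def mulr_gt0.
have k_ge0 : 0 <= k by rewrite k_def; lra.
have -> : t ^+ 2 * (m ^+ 2 + 2 * m * k * (w ^+ 2 + v ^+ 2)) - (m * w) ^+ 2
    = t ^+ 2 * m ^+ 2 + m * t ^+ 2 * w ^+ 2 * (2 * t ^+ 2 + u ^+ 2)
      + 2 * t ^+ 2 * m * k * v ^+ 2 by rewrite m_def k_def; ring.
have := mulr_gt0 t2_pos (exprn_gt0 2 m_pos).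
have : 0 <= 2 * t ^+ 2 + u ^+ 2 by lra.
move/(mulr_ge0 (mulr_ge0 (ltW (mulr_gt0 m_pos t2_pos)) (sqr_ge0 w))).
have := mulr_ge0 (mulr_ge0 (ltW (mulr_gt0 t2_pos m_pos)) k_ge0) (sqr_ge0 v).
by lra.
Qed.

(* The quantity G
   satisfies G^2 = disc A1 disc A2 - 4 det [A1, A2], hence vanishes, and
   then 4 det A_i = (tr A_i)^2 and cross(A_i, P) = m w_i for the P below. *)
Lemma repeated_commuting_candidate A1 A2 :
  disc A1 = 0 -> disc A2 = 0 -> \tr A1 < 0 -> \tr A2 < 0 -> commutator A1 A2 = 0 ->
  exists a b c, lyap_candidate A1 A2 a b c.
Proof.
move=> disc1 disc2 tr1_neg tr2_neg comm.
pose G := (A1 0 0 - A1 1 1) * (A2 0 0 - A2 1 1) + 2 * A1 0 1 * A2 1 0 + 2 * A1 1 0 * A2 0 1.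
have G0 : G = 0.
  have G2 : G ^+ 2 = disc A1 * disc A2 - 4 * \det (commutator A1 A2).
    by rewrite /G /disc !tr2 !det2 !commutatorE; ring.
  by move/eqP: G2; rewrite disc1 comm det0 mul0r mulr0 subr0 sqrf_eq0 => /eqP.
pose m := \tr A1 ^+ 2 * \tr A2 ^+ 2; pose k := \tr A1 ^+ 2 + \tr A2 ^+ 2.
pose w1 := A1 1 0 - A1 0 1; pose w2 := A2 1 0 - A2 0 1.
pose a := m + k * (2 * w1 * A1 1 0 + 2 * w2 * A2 1 0).
pose b := - (k * (w1 * (A1 0 0 - A1 1 1) + w2 * (A2 0 0 - A2 1 1))).
pose c := m - k * (2 * w1 * A1 0 1 + 2 * w2 * A2 0 1).
have detP : a * c - b ^+ 2 = m ^+ 2 + 2 * m * k * (w1 ^+ 2 + w2 ^+ 2).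
  transitivity (m ^+ 2 + 2 * m * k * (w1 ^+ 2 + w2 ^+ 2)
      - k ^+ 2 * (w1 ^+ 2 * disc A1 + 2 * w1 * w2 * G + w2 ^+ 2 * disc A2)).
    by rewrite /a /b /c /w1 /w2 /G /disc !tr2 !det2; ring.
  by rewrite disc1 disc2 G0; ring.
have cross1 : cross A1 a b c = m * w1.
  transitivity (m * w1 - k * (w1 * disc A1 + w2 * G)).
    by rewrite /cross /a /b /c /w1 /w2 /G /disc !tr2 !det2; ring.
  by rewrite disc1 G0; ring.
have cross2 : cross A2 a b c = m * w2.
  transitivity (m * w2 - k * (w2 * disc A2 + w1 * G)).
    by rewrite /cross /a /b /c /w1 /w2 /G /disc !tr2 !det2; ring.
  by rewrite disc2 G0; ring.
have detA A : disc A = 0 -> 4 * \det A = \tr A ^+ 2.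
  by move=> discA; apply/eqP; rewrite eq_sym -subr_eq0 -discA.
exists a, b, c; split; rewrite ?det_lyap ?detP ?cross1 ?cross2 ?detA //.
- have m_pos : 0 < m by rewrite mulr_gt0 ?exprn_even_gt0 ?ltr0_neq0.
  have k_ge0 : 0 <= k by rewrite addr_ge0 ?sqr_ge0.
  have := mulr_ge0 (mulr_ge0 (ltW m_pos) k_ge0) (addr_ge0 (sqr_ge0 w1) (sqr_ge0 w2)).
  by have := exprn_gt0 2 m_pos; lra.
- by apply: repeated_bound => //; apply: ltr0_neq0.
- rewrite (addrC (w1 ^+ 2)); apply: (@repeated_bound (\tr A2) (\tr A1)).
  + exact: ltr0_neq0.
  + exact: ltr0_neq0.
  + by rewrite /m mulrC.
  + by rewrite /k addrC.
Qed.

Lemma commuting_candidate A1 A2 :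
  \tr A1 < 0 -> 0 < \det A1 -> \tr A2 < 0 -> 0 < \det A2 -> commutator A1 A2 = 0 ->
  exists a b c, lyap_candidate A1 A2 a b c.
Proof.
move=> T1 D1 T2 D2 comm12.
have comm21 : commutator A2 A1 = 0 by rewrite commutator_swap comm12 oppr0.
have swap : (exists a b c, lyap_candidate A2 A1 a b c) ->
    exists a b c, lyap_candidate A1 A2 a b c.
  by case=> a [b [c /lyap_candidate_sym cand]]; exists a, b, c.
have [disc1 | disc1 | disc1] := ltgtP (disc A1) 0.
- exact: complex_commuting_candidate.
- exact: real_commuting_candidate.
have [disc2 | disc2 | disc2] := ltgtP (disc A2) 0.
- exact/swap/complex_commuting_candidate.
- exact/swap/real_commuting_candidate.
- exact: repeated_commuting_candidate.
Qed.

Lemma common_candidate A1 A2 :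
  \tr A1 < 0 -> 0 < \det A1 -> \tr A2 < 0 -> 0 < \det A2 ->
  0 <= \det (commutator A1 A2) ->
  exists a b c, 0 < a /\ lyap_candidate A1 A2 a b c.
Proof.
move=> T1 D1 T2 D2 detK.
suff [a [b [c cand]]] : exists a b c, lyap_candidate A1 A2 a b c.
  exact: lyap_candidate_pos cand.
have [K_sym | K_asym] := eqVneq (commutator A1 A2 0 1) (commutator A1 A2 1 0).
- by apply: commuting_candidate => //; apply: commutator_zero.
- exact: generic_candidate.
Qed.

End TwoByTwo.

Theorem mainTheorem2 (R : rcfType) (A1 A2 : 'M[R]_2) :
  hurwitz A1 -> hurwitz A2 ->
  0 <= \det (commutator A1 A2) ->
  exists P : 'M[R]_2,
    [/\ pos_def P,
        neg_def (A1^T *m P + P *m A1) &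
        neg_def (A2^T *m P + P *m A2)].
Proof.
move=> /hurwitz2 [T1 D1] /hurwitz2 [T2 D2] detK.
have [a [b [c [a_pos [detP L1 L2]]]]] := common_candidate T1 D1 T2 D2 detK.
exists (sym2 a b c); split.
- exact: sym2_pos_def.
- exact: lyap_neg_def.
- exact: lyap_neg_def.
Qed.
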